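(* Let $G=(V,D)$ be a simple directed graph that is not complete, and let $J=J(\psi_G)$. Then for every node $i\in V$ there exists a set $S$ of $|D|+1$ columns of $J$ such that $S$ contains no column $K_{ij}$ with $j\in V$ (including $K_{ii}$), and $\mathrm{rank}(J_S)\ge|D|-|\mathrm{ch}(i)|+1$.
   Context: A directed graph $G=(V,D)$ has edge set $D\subseteq V\times V$ of ordered pairs $(i,j)$, $i\neq j$. It is simple if $(i,j)$ and $(j,i)$ are never both in $D$. It is complete if every pair of distinct nodes is adjacent. $\mathrm{ch}(i)$ is the set of children of $i$. $\Lambda$ is the $V\times V$ matrix with indeterminate entries $\lambda_{ij}$ for $(i,j)\in D$ and zeros elsewhere, and $s$ is a further indeterminate. Let $\psi_G(\Lambda,s)=s(I-\Lambda)(I-\Lambda)^T=K$. The transposed Jacobian $J(\psi_G)$ has rows indexed by $\{\lambda_{kl}:(k,l)\in D\}\cup\{s\}$ and columns indexed by $K_{ij}$ (with $K_{ij}=K_{ji}$), with entries $\partial K_{ij}/\partial\theta$. $J_S$ is the submatrix on the columns in $S$, and rank means rank over $\mathbb{R}(\lambda,s)$. *)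

From HB Require Import structures.
From mathcomp Require Import all_boot all_order all_algebra.
From mathcomp Require Import fraction reals.
From mathcomp Require Import mpoly.
Set Implicit Arguments. Unset Strict Implicit. Unset Printing Implicit Defensive.
Import Order.TTheory GRing.Theory Num.Theory.
Local Open Scope ring_scope.

Section Defs.
Variables (R : realType) (n : nat) (D : {set 'I_n * 'I_n}).

(* polynomial ring in the indeterminates lambda_kl ((k,l) in D) and s:
   variable number (index of (k,l) in enum D) is lambda_kl, variable #|D| is s *)
Definition PR := {mpoly R[#|D|.+1]}.

Definition lam (k l : 'I_n) : PR :=
  if (k, l) \in D then 'X_(inord (index (k, l) (enum D))) else 0.

Definition svar : PR := 'X_(ord_max).

Definition Lam : 'M[PR]_n := \matrix_(k, l) lam k l.

Definition Kmx : 'M[PR]_n :=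
  \matrix_(a, b) (svar * ((1%:M - Lam) *m (1%:M - Lam)^T) a b).

(* J_S : rows = all indeterminates (lambda_kl, (k,l) in D, and s),
   columns = the elements of S (a column K_ab is encoded by (a,b) with a <= b),
   entries d K_ab / d theta, viewed in the fraction field R(lambda, s). *)
Definition JS (S : {set 'I_n * 'I_n}) : 'M[{fraction PR}]_(#|D|.+1, #|S|) :=
  \matrix_(r, c) (FracField.tofrac (mderiv r (Kmx (enum_val c).1 (enum_val c).2))).

Definition children (i : 'I_n) : {set 'I_n} := [set j | (i, j) \in D].

End Defs.

From HB Require Import structures.
From mathcomp Require Import all_boot all_order all_algebra.
From mathcomp Require Import fraction reals.
From mathcomp Require Import mpoly.
From mathcomp Require Import zify ring lra.
Set Implicit Arguments. Unset Strict Implicit. Unset Printing Implicit Defensive.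
Import Order.TTheory GRing.Theory Num.Theory.
Local Open Scope ring_scope.

(* Rank does not increase under specialization of the indeterminates, so it
   suffices to bound the rank of J_S at the point lambda_kl = [l == i], s = 1.
   There, with p the indicator of the parents of i, the derivative of K_ab
   (a, b != i) in a direction w is
     w_s (d_ab + p_a p_b) - w_ab - w_ba + w_ai p_b + p_a w_bi.
   Take for S the image of D plus one non-edge {u, v} under the map sending a
   pair through i to the diagonal column of its other endpoint and any other
   pair to its sorted form; on a simple graph this map is injective.  A left
   kernel vector w supported off the rows lambda_il (l a child of i) is then
   zero: the diagonal columns of the parents give w_ki = -w_s; the non-edge
   {u, v} is chosen so that S contains the diagonal column of a non-parent of
   i or the column of a non-edge between two parents, which forces w_s = 0;
   then the column of every remaining edge kills its weight. *)

Section DirectionalDerivative.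
Variables (F : comNzRingType) (k : nat) (v w : 'I_k -> F).

Definition dirderiv (p : {mpoly F[k]}) : F := \sum_r w r * (mderiv r p).@[v].

Lemma dirderiv_is_zmod_morphism : zmod_morphism dirderiv.
Proof.
move=> p q; rewrite /dirderiv -sumrB.
by apply: eq_bigr => r _; rewrite mderivB mevalB mulrBr.
Qed.

HB.instance Definition _ :=
  GRing.isZmodMorphism.Build {mpoly F[k]} F dirderiv dirderiv_is_zmod_morphism.

Lemma dirderivM p q : dirderiv (p * q) = dirderiv p * q.@[v] + p.@[v] * dirderiv q.
Proof.
rewrite /dirderiv big_distrl big_distrr -big_split; apply: eq_bigr => r _ /=.
by rewrite mderivM mevalD !mevalM; ring.
Qed.

Lemma dirderivC c : dirderiv c%:MP = 0.
Proof. by rewrite /dirderiv big1 // => r _; rewrite mderivC meval0 mulr0. Qed.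

Lemma dirderiv_nat m : dirderiv m%:R = 0.
Proof. by rewrite -mpolyC_nat dirderivC. Qed.

Lemma dirderivX j : dirderiv 'X_j = w j.
Proof.
rewrite /dirderiv (bigD1 j) //= big1 ?addr0 => [|r /negPf rj].
  rewrite mderivX mevalZ mevalX mnm1E eqxx mul1r big1 ?mulr1 // => r _.
  by rewrite mnmBE subnn expr0.
by rewrite mderivX mevalZ mnm1E eq_sym rj mul0r mulr0.
Qed.

End DirectionalDerivative.

Lemma mxrank_factor_id (F : fieldType) m p (A : 'M[F]_(m, p)) :
  exists (P : 'M_(\rank A, m)) (Q : 'M_(p, \rank A)), P *m A *m Q = 1%:M.
Proof.
set r := \rank A.
pose P : 'M_(r, m) := pid_mx r *m invmx (col_ebase A).
pose Q : 'M_(p, r) := invmx (row_ebase A) *m pid_mx r.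
exists P, Q; rewrite -{1}(mulmx_ebase A) /P /Q !mulmxA mulmxKV ?col_ebase_unit //.
rewrite mulmxK ?row_ebase_unit // !mul_pid_mx -pid_mx_1.
by congr pid_mx; have := rank_leq_row A; have := rank_leq_col A; rewrite -/r; lia.
Qed.

Lemma mxrank_meval_le_tofrac (F : fieldType) k m p (M : 'M[{mpoly F[k]}]_(m, p))
    (v : 'I_k -> F) :
  (\rank (map_mx (meval v) M) <= \rank (map_mx (@tofrac _) M))%N.
Proof.
have [P [Q PMQ]] := mxrank_factor_id (map_mx (meval v) M).
pose C := map_mx (fun x : F => x%:MP_[k]).
pose X := C _ _ P *m M *m C _ _ Q.
have evalX : map_mx (meval v) X = 1%:M.
  rewrite !map_mxM -!map_mx_comp -PMQ.
  by congr (_ *m _ *m _); apply/matrixP => a b; rewrite !mxE /= mevalC.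
have detX : \det X != 0.
  apply/eqP => /(congr1 (meval v)); rewrite -det_map_mx evalX det1 meval0.
  by move/eqP; rewrite oner_eq0.
have : map_mx (@tofrac _) X \in unitmx.
  by rewrite unitmxE det_map_mx unitfE tofrac_eq0.
move/mxrank_unit; rewrite !map_mxM => <-.
exact: leq_trans (mxrankM_maxl _ _) (mxrankM_maxr _ _).
Qed.

Lemma card_le_mxrank (F : fieldType) m p (A : 'M[F]_(m, p)) (P : {set 'I_m}) :
  (forall u : 'rV_m, (forall r, r \notin P -> u 0 r = 0) -> u *m A = 0 -> u = 0) ->
  (#|P| <= \rank A)%N.
Proof.
move=> supp_ker.
pose f : 'I_#|P| -> 'I_m := enum_val.
have : row_free (rowsub f A).
  apply: inj_row_free => x; rewrite rowsubE mulmxA => /(supp_ker _) xf0.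
  have {}xf0 : x *m rowsub f 1%:M = 0.
    apply: xf0 => r rP; rewrite mxE big1 // => j _.
    rewrite !mxE; case: eqP => [fj | _]; last by rewrite mulr0.
    by move: rP; rewrite -fj enum_valP.
  apply/rowP => j; have := congr1 (fun y : 'rV_m => y 0 (f j)) xf0.
  rewrite !mxE (bigD1 j) //= big1 => [|j' j'j]; last first.
    by rewrite !mxE (inj_eq enum_val_inj) (negbTE j'j) mulr0.
  by rewrite !mxE eqxx mulr1 addr0.
move/eqP <-; apply: mxrankS; exact: rowsub_sub.
Qed.

Section Specialization.
Variables (R : realType) (n : nat) (D : {set 'I_n * 'I_n}) (i : 'I_n).

Definition edge_var (e : 'I_n * 'I_n) : 'I_#|D|.+1 := inord (index e (enum D)).

Lemma edge_varE e : e \in D -> edge_var e = index e (enum D) :> nat.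
Proof. by move=> eD; rewrite inordK // ltnS cardE index_size. Qed.

Lemma edge_var_lt e : e \in D -> (edge_var e < #|D|)%N.
Proof. by move=> eD; rewrite edge_varE // cardE index_mem mem_enum. Qed.

Lemma edge_var_onto (r : 'I_#|D|.+1) :
  (r < #|D|)%N -> exists2 e, e \in D & r = edge_var e.
Proof.
move=> r_lt; have rD : nth (i, i) (enum D) r \in D by rewrite -mem_enum mem_nth -?cardE.
exists (nth (i, i) (enum D) r) => //.
by apply: val_inj; rewrite /= edge_varE // index_uniq ?enum_uniq // -cardE.
Qed.

Lemma lam_edge k l : (k, l) \in D -> lam R D k l = 'X_(edge_var (k, l)).
Proof. by rewrite /lam => ->. Qed.

(* The point lambda_kl = [l == i] ((k, l) in D), s = 1. *)
Definition pt (r : 'I_#|D|.+1) : R :=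
  if (r < #|D|)%N then ((nth (i, i) (enum D) r).2 == i)%:R else 1.

Definition par (k : 'I_n) : R := ((k, i) \in D)%:R.

Definition IsubLam (a c : 'I_n) : R := (a == c)%:R - par a * (c == i)%:R.

Lemma svar_pt : (svar R D).@[pt] = 1.
Proof. by rewrite mevalXU /pt ltnn. Qed.

Lemma IsubLam_pt a c : ((a == c)%:R - lam R D a c).@[pt] = IsubLam a c.
Proof.
rewrite mevalB rmorph_nat /IsubLam /par; congr (_ - _).
have [acD | acD] := boolP ((a, c) \in D); last first.
  rewrite /lam (negbTE acD) meval0.
  by case: eqP => [ci | _]; rewrite ?mulr0 // -ci (negbTE acD) mul0r.
rewrite lam_edge // mevalXU /pt edge_var_lt // edge_varE // nth_index ?mem_enum //=.
by case: eqP => [<- | _]; rewrite ?acD ?mulr1 ?mulr0.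
Qed.

Lemma IsubLam_off a c : c != i -> IsubLam a c = (a == c)%:R.
Proof. by move/negbTE=> ci; rewrite /IsubLam ci mulr0 subr0. Qed.

Lemma IsubLam_at a : a != i -> IsubLam a i = - par a.
Proof. by move/negbTE=> ai; rewrite /IsubLam ai eqxx mulr1 sub0r. Qed.

Lemma sum_mul_IsubLam (f : 'I_n -> R) b :
  b != i -> \sum_c f c * IsubLam b c = f b - f i * par b.
Proof.
move=> bi; rewrite (bigD1 i) //= IsubLam_at // mulrN addrC; congr (_ - _).
rewrite (bigD1 b) //= IsubLam_off // eqxx mulr1 big1 ?addr0 // => c /andP[ci cb].
by rewrite IsubLam_off // eq_sym (negbTE cb) mulr0.
Qed.

Lemma KmxE a b : Kmx R D a b =
  svar R D * \sum_c (((a == c)%:R - lam R D a c) * ((b == c)%:R - lam R D b c)).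
Proof. by rewrite !mxE; congr (_ * _); apply: eq_bigr => c _; rewrite !mxE. Qed.

Variable w : 'I_#|D|.+1 -> R.

Definition wlam (k l : 'I_n) : R := if (k, l) \in D then w (edge_var (k, l)) else 0.

Lemma dirderiv_IsubLam a c :
  dirderiv pt w ((a == c)%:R - lam R D a c) = - wlam a c.
Proof.
rewrite raddfB /= dirderiv_nat sub0r /wlam.
case: ifP => acD; first by rewrite lam_edge // dirderivX.
by rewrite /lam acD raddf0 oppr0.
Qed.

Lemma dirderiv_Kmx a b : a != i -> b != i ->
  dirderiv pt w (Kmx R D a b) = w ord_max * ((a == b)%:R + par a * par b)
    - (wlam a b - wlam a i * par b) - (wlam b a - wlam b i * par a).
Proof.
move=> ai bi; rewrite KmxE dirderivM dirderivX svar_pt mul1r !raddf_sum /=.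
under eq_bigr do rewrite mevalM !IsubLam_pt.
under [X in _ + X]eq_bigr do rewrite dirderivM !IsubLam_pt !dirderiv_IsubLam.
rewrite sum_mul_IsubLam // IsubLam_off // IsubLam_at // big_split /=.
under [X in _ + (X + _)]eq_bigr do rewrite mulNr.
under [X in _ + (_ + X)]eq_bigr do rewrite mulrN mulrC.
rewrite !sumrN !sum_mul_IsubLam //; ring.
Qed.

End Specialization.

(* On such a column the kernel equation at [pt] reduces to w_s * (+-1) = 0. *)
Definition pins_s n (D : {set 'I_n * 'I_n}) (i : 'I_n) (S : {set 'I_n * 'I_n}) :=
  exists a b, [/\ ((a, b) \in S) || ((b, a) \in S), (a, b) \notin D, (b, a) \notin D
    & (a == b) != ((a, i) \in D) && ((b, i) \in D)].

Section Kernel.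
Variables (R : realType) (n : nat) (D : {set 'I_n * 'I_n}) (i : 'I_n).
Hypothesis D_loopless : forall k, (k, k) \notin D.
Hypothesis D_simple : forall k l, (k, l) \in D -> (l, k) \notin D.

Variable S : {set 'I_n * 'I_n}.
Hypothesis S_avoid : forall x, x \in S -> x.1 != i /\ x.2 != i.
Hypothesis S_parent : forall k, (k, i) \in D -> (k, k) \in S.
Hypothesis S_edge : forall k l, (k, l) \in D -> k != i -> l != i ->
  ((k, l) \in S) || ((l, k) \in S).
Hypothesis S_pin : pins_s D i S.

Local Notation pt := (@pt R n D i).
Local Notation par := (par R D i).

Section KernelVector.
Variable w : 'I_#|D|.+1 -> R.
Hypothesis w_ker : forall x, x \in S -> dirderiv pt w (Kmx R D x.1 x.2) = 0.

Local Notation ws := (w ord_max).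
Local Notation wlam := (wlam w).

Lemma wlam_notin k l : (k, l) \notin D -> wlam k l = 0.
Proof. by rewrite /wlam => /negbTE ->. Qed.

Lemma wlam_into k : k != i -> wlam k i = - ws * par k.
Proof.
move=> ki; have [kiD | kiD] := boolP ((k, i) \in D); last first.
  by rewrite wlam_notin // /par (negbTE kiD) mulr0.
have := w_ker (S_parent kiD); rewrite dirderiv_Kmx // wlam_notin // /par kiD eqxx /=.
lra.
Qed.

Lemma w_Kmx_eq a b : ((a, b) \in S) || ((b, a) \in S) ->
  ws * ((a == b)%:R - par a * par b) = wlam a b + wlam b a.
Proof.
wlog abS : a b / (a, b) \in S.
  move=> ab_eq /orP[abS | baS]; first by apply: ab_eq; rewrite ?abS.
  by rewrite eq_sym [par a * _]mulrC [RHS]addrC; apply: ab_eq; rewrite ?baS.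
move=> _; have [ai bi] := S_avoid abS; have := w_ker abS.
rewrite dirderiv_Kmx // !wlam_into //; lra.
Qed.

Lemma ws_eq0 : ws = 0.
Proof.
have [a [b [abS abD baD pin]]] := S_pin.
have nz : (a == b)%:R - (((a, i) \in D) && ((b, i) \in D))%:R != 0 :> R.
  by case: (a == b) pin; case: (_ && _) => // _; rewrite ?subr0 ?sub0r ?oppr_eq0 oner_eq0.
have := w_Kmx_eq abS; rewrite !wlam_notin // addr0 /par -natrM mulnb.
by move/eqP; rewrite mulf_eq0 (negbTE nz) orbF => /eqP.
Qed.

Lemma wlam_eq0 k l : k != i -> wlam k l = 0.
Proof.
move=> ki; have [-> | li] := eqVneq l i; first by rewrite wlam_into // ws_eq0 oppr0 mul0r.
have [klD | klD] := boolP ((k, l) \in D); last exact: wlam_notin.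
have := w_Kmx_eq (S_edge klD ki li).
by rewrite ws_eq0 mul0r (wlam_notin (D_simple klD)) addr0.
Qed.

Lemma w_eq0 : (forall l, (i, l) \in D -> w (edge_var D (i, l)) = 0) ->
  forall r, w r = 0.
Proof.
move=> w_children r; have [r_max | r_lt] := leqP #|D| r.
  suff -> : r = ord_max by exact: ws_eq0.
  by apply: val_inj; apply/eqP; rewrite eqn_leq r_max -ltnS ltn_ord.
have [[k l] klD ->] := edge_var_onto i r_lt.
have [ki | ki] := eqVneq k i; first by rewrite ki w_children // -ki.
by have := wlam_eq0 l ki; rewrite /wlam klD.
Qed.

End KernelVector.

Lemma rank_JS_ge : (#|D|.+1 - #|children D i| <= \rank (JS R D S))%N.
Proof.
pose M : 'M[PR R D]_(#|D|.+1, #|S|) :=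
  \matrix_(r, c) mderiv r (Kmx R D (enum_val c).1 (enum_val c).2).
have -> : JS R D S = map_mx (@tofrac _) M by apply/matrixP => r c; rewrite !mxE.
apply: leq_trans (mxrank_meval_le_tofrac M pt).
pose C := [set edge_var D (i, l) | l in children D i].
apply: leq_trans (card_le_mxrank (P := ~: C) _).
  by rewrite [#|~: C|]cardsCs setCK card_ord leq_sub2l // leq_imset_card.
move=> u u_supp uM0; apply/rowP => r; rewrite mxE.
apply: (w_eq0 (w := u 0)) => [x xS | l il].
  have := congr1 (fun y : 'rV_#|S| => y 0 (enum_rank_in xS x)) uM0.
  rewrite !mxE => <-; apply: eq_bigr => r' _.
  by rewrite !mxE enum_rankK_in.
by apply: u_supp; rewrite inE negbK; apply/imsetP; exists l; rewrite ?inE.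
Qed.

End Kernel.

Section Columns.
Variables (n : nat) (i : 'I_n).

Definition column_of (e : 'I_n * 'I_n) : 'I_n * 'I_n :=
  if e.1 == i then (e.2, e.2) else if e.2 == i then (e.1, e.1)
  else if (e.1 <= e.2)%N then e else (e.2, e.1).

Lemma column_of_sorted e : ((column_of e).1 <= (column_of e).2)%N.
Proof. by rewrite /column_of; do 3?case: ifP => //=; rewrite leqNgt => /negbFE/ltnW. Qed.

Lemma column_of_avoid e : e.1 != e.2 -> (column_of e).1 != i /\ (column_of e).2 != i.
Proof.
case: e => a b; rewrite /column_of /=.
have [-> | ai] := eqVneq a i; first by rewrite eq_sym.
have [-> | bi] := eqVneq b i; first by [].
by case: ifP.
Qed.

Lemma column_of_from l : column_of (i, l) = (l, l).
Proof. by rewrite /column_of eqxx. Qed.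

Lemma column_of_into k : k != i -> column_of (k, i) = (k, k).
Proof. by rewrite /column_of /= eqxx => /negbTE ->. Qed.

Lemma column_of_off k l : k != i -> l != i ->
  column_of (k, l) = (k, l) \/ column_of (k, l) = (l, k).
Proof. by rewrite /column_of /= => /negbTE-> /negbTE->; case: ifP; [left | right]. Qed.

Lemma column_of_eq x y : x.1 != x.2 -> y.1 != y.2 -> column_of x = column_of y ->
  x = y \/ x = (y.2, y.1).
Proof.
case: x y => [a b] [c d]; rewrite /column_of /=.
case: (eqVneq a i) => [->|ai]; case: (eqVneq b i) => [->|bi];
case: (eqVneq c i) => [->|ci]; case: (eqVneq d i) => [->|di];
case: (leqP a b) => ab; case: (leqP c d) => cd //=; rewrite ?eqxx //;
move=> h1 h2 [] ? ?; subst; rewrite ?eqxx ?ai ?bi ?ci ?di // in h1 h2 *; by [left | right].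
Qed.
End Columns.

Section ColumnChoice.
Variables (R : realType) (n : nat) (D : {set 'I_n * 'I_n}) (i : 'I_n).
Hypothesis D_loopless : forall k, (k, k) \notin D.
Hypothesis D_simple : forall k l, (k, l) \in D -> (l, k) \notin D.

Lemma card_children_le : (#|children D i| <= #|D|)%N.
Proof.
have pair_inj : injective (pair i : 'I_n -> 'I_n * 'I_n) by move=> l l' [].
rewrite -(card_imset _ pair_inj).
by apply/subset_leq_card/subsetP => _ /imsetP[l + ->]; rewrite inE.
Qed.

Lemma mem_columns_off (T : {set 'I_n * 'I_n}) k l : (k, l) \in T -> k != i -> l != i ->
  ((k, l) \in column_of i @: T) || ((l, k) \in column_of i @: T).
Proof.
move=> klT ki li; have := imset_f (column_of i) klT.
by case: (column_of_off ki li) => ->  ->; rewrite ?orbT.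
Qed.

Lemma columns_of_nonedge u v : u != v -> (u, v) \notin D -> (v, u) \notin D ->
    pins_s D i (column_of i @: ((u, v) |: D)) ->
  exists S : {set 'I_n * 'I_n},
    [/\ forall p, p \in S -> (p.1 <= p.2)%N,
        #|S| = #|D|.+1,
        forall p, p \in S -> p.1 != i /\ p.2 != i
      & (#|D| - #|children D i| + 1 <= \rank (JS R D S))%N].
Proof.
set T := (u, v) |: D => uv uvD vuD pin.
have T_loopless x : x \in T -> x.1 != x.2.
  rewrite !inE => /orP[/eqP -> // | xD]; apply: contraNneq (D_loopless x.1) => x12.
  by rewrite {2}x12 -surjective_pairing.
have T_simple x : x \in T -> (x.2, x.1) \notin T.
  rewrite !inE => /orP[/eqP -> /= | xD]; first by rewrite xpair_eqE eq_sym (negbTE uv) vuD.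
  have x21D : (x.2, x.1) \notin D by apply: D_simple; rewrite -surjective_pairing.
  rewrite (negbTE x21D) orbF xpair_eqE.
  by apply: contraNN vuD => /andP[/eqP <- /eqP <-]; rewrite -surjective_pairing.
have column_inj : {in T &, injective (column_of i)}.
  move=> x y xT yT /(column_of_eq (T_loopless _ xT) (T_loopless _ yT))[// | xy].
  by have := T_simple _ yT; rewrite -xy xT.
exists (column_of i @: T); split.
- by move=> _ /imsetP[x _ ->]; apply: column_of_sorted.
- by rewrite card_in_imset // cardsU1 uvD.
- by move=> _ /imsetP[x xT ->]; apply/column_of_avoid/T_loopless.
rewrite addn1 -subSn ?card_children_le //; apply: rank_JS_ge pin => //.
- by move=> _ /imsetP[x xT ->]; apply/column_of_avoid/T_loopless.
- move=> k kiD; have ki : k != i by apply: contraTneq kiD => ->; apply: D_loopless.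
  by apply/imsetP; exists (k, i); rewrite ?column_of_into // !inE kiD orbT.
- by move=> k l klD; apply: mem_columns_off; rewrite !inE klD orbT.
Qed.

Lemma exists_pinning_pair : (exists u v, [/\ u != v, (u, v) \notin D & (v, u) \notin D]) ->
  exists u v, [/\ u != v, (u, v) \notin D, (v, u) \notin D
                & pins_s D i (column_of i @: ((u, v) |: D))].
Proof.
move=> [u [v [uv uvD vuD]]].
have [a /andP[ai aiD] | all_parents] := pickP (fun a => (a != i) && ((a, i) \notin D)).
  have pin_a T : (i, a) \in T -> pins_s D i (column_of i @: T).
    move=> iaT; exists a, a; rewrite eqxx (negbTE aiD) D_loopless; split => //.
    by apply/orP; left; apply/imsetP; exists (i, a); rewrite ?column_of_from.
  have [iaD | iaD] := boolP ((i, a) \in D).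
    by exists u, v; split => //; apply: pin_a; rewrite !inE iaD orbT.
  exists i, a; split; rewrite 1?eq_sym //; apply: pin_a; exact: setU11.
have parent k : k != i -> (k, i) \in D.
  by move=> ki; have := all_parents k; rewrite ki => /negbFE.
have ui : u != i by apply: contraNneq vuD => ui; rewrite ui parent // -ui eq_sym.
have vi : v != i by apply: contraNneq uvD => vi; rewrite vi parent // -vi.
exists u, v; split => //; exists u, v; rewrite (negbTE uv) !parent //; split => //.
by apply: mem_columns_off; rewrite ?setU11.
Qed.

End ColumnChoice.

Theorem lemma4p2 (R : realType) (n : nat) (D : {set 'I_n * 'I_n})
  (Hloop : forall i : 'I_n, (i, i) \notin D)
  (Hsimple : forall i j : 'I_n, (i, j) \in D -> (j, i) \notin D)
  (Hnotcomplete : exists i j : 'I_n,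
      [/\ i != j, (i, j) \notin D & (j, i) \notin D])
  (i : 'I_n) :
  exists S : {set 'I_n * 'I_n},
    [/\ forall p, p \in S -> (p.1 <= p.2)%N,
        #|S| = #|D|.+1,
        forall p, p \in S -> p.1 != i /\ p.2 != i
      & (#|D| - #|children D i| + 1 <= \rank (JS R D S))%N].
Proof.
have [u [v [uv uvD vuD pin]]] := exists_pinning_pair i Hloop Hnotcomplete.
exact: (columns_of_nonedge R Hloop Hsimple uv uvD vuD pin).
Qed.
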